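(* Let $L$ sensors observe $x_l=\theta+\sigma\eta_l$, $l=1,\dots,L$, where $\theta\in(0,\theta_R]$ is deterministic and unknown, $\sigma>0$, and the $\eta_l$ are i.i.d. real random variables with a distribution symmetric about zero and (real-valued) characteristic function $\varphi_\eta(t)=E[e^{jt\eta_l}]$. Each sensor transmits $\sqrt{P/L}\,e^{j\omega x_l}$ with $\omega\in(0,2\pi/\theta_R]$ over a Gaussian multiple-access channel, so the fusion center receives $y_L=\sqrt{P/L}\sum_{l=1}^L e^{j\omega x_l}+\nu$ with $\nu\sim\mathcal{CN}(0,\sigma_\nu^2)$ independent of the $\eta_l$, and forms $z_L=y_L/\sqrt{L}$ and $\mathbf z_L=[\mathrm{Re}\,z_L\ \ \mathrm{Im}\,z_L]^T$. For candidate parameters $(\theta,\sigma)$ let $\bar{\mathbf z}(\theta,\sigma)=\sqrt P\,\varphi_\eta(\sigma\omega)[\cos(\omega\theta)\ \ \sin(\omega\theta)]^T$ and let $\boldsymbol\Sigma(\theta,\sigma)$ be the symmetric $2\times2$ matrix with $\Sigma_{11}=P[v_c\cos^2(\omega\theta)+v_s\sin^2(\omega\theta)]+\tfrac12\sigma_\nu^2$, $\Sigma_{22}=P[v_s\cos^2(\omega\theta)+v_c\sin^2(\omega\theta)]+\tfrac12\sigma_\nu^2$, $\Sigma_{12}=\Sigma_{21}=P(v_c-v_s)\sin(\omega\theta)\cos(\omega\theta)$, where $v_c=\tfrac12+\tfrac12\varphi_\eta(2\sigma\omega)-\varphi_\eta^2(\sigma\omega)$ and $v_s=\tfrac12-\tfrac12\varphi_\eta(2\sigma\omega)$.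 Define $(\hat\theta^{\rm opt},\hat\sigma^{\rm opt})=\arg\min_{\theta,\sigma}[\mathbf z_L-\bar{\mathbf z}(\theta,\sigma)]^T\boldsymbol\Sigma(\theta,\sigma)^{-1}[\mathbf z_L-\bar{\mathbf z}(\theta,\sigma)]$, and let $\hat\theta^{\rm sim}$ be the solution of $\angle z_L=\omega\theta$ and $\hat\sigma^{\rm sim}$ the solution of $|z_L|=\sqrt P\,\varphi_\eta(\sigma\omega)$. If $|z_L|\le\sqrt P$, then $\hat\theta^{\rm opt}=\hat\theta^{\rm sim}$ and $\hat\sigma^{\rm opt}=\hat\sigma^{\rm sim}$.
   Context: $\angle z$ denotes the argument (phase) of a complex number $z$; $j=\sqrt{-1}$. $\mathcal{CN}(0,\sigma_\nu^2)$ is the circularly symmetric complex Gaussian distribution with variance $\sigma_\nu^2$. $P>0$ is the total transmit power. *)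

From HB Require Import structures.
From mathcomp Require Import all_boot all_order all_algebra.
From mathcomp Require Import all_classical all_reals all_analysis.
Set Implicit Arguments. Unset Strict Implicit. Unset Printing Implicit Defensive.
Import Order.TTheory GRing.Theory Num.Theory.
Local Open Scope classical_set_scope.
Local Open Scope ring_scope.

Section Defs.
Context {R : realType}.

Definition symmetric_law (mu : probability (measurableTypeR R) R) : Prop :=
  forall A : set R, measurable A -> mu [set - x | x in A] = mu A.

(* characteristic function phi_eta(t) = E[e^{j t eta}]; for a symmetric law its
   imaginary part E[sin(t eta)] vanishes, so it equals E[cos(t eta)]. *)
Definition charfun (mu : probability (measurableTypeR R) R) (t : R) : R :=
  Rintegral mu setT (fun x => cos (t * x)).

(* a complex number z = (Re z, Im z) as a column vector [Re z; Im z] *)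
Definition cvec2 (a b : R) : 'cV[R]_2 :=
  \col_(i < 2) (if i == ord0 then a else b).

Definition cmod2 (a b : R) : R := Num.sqrt (a ^+ 2 + b ^+ 2).

Definition zbar (phi : R -> R) (P w th s : R) : 'cV[R]_2 :=
  cvec2 (Num.sqrt P * phi (s * w) * cos (w * th))
        (Num.sqrt P * phi (s * w) * sin (w * th)).

Definition vc (phi : R -> R) (w s : R) : R :=
  2^-1 + 2^-1 * phi (2 * s * w) - phi (s * w) ^+ 2.
Definition vs (phi : R -> R) (w s : R) : R :=
  2^-1 - 2^-1 * phi (2 * s * w).

Definition Sigma (phi : R -> R) (P w sn2 th s : R) : 'M[R]_2 :=
  let c := cos (w * th) in let sn := sin (w * th) in
  let a := vc phi w s in let b := vs phi w s in
  \matrix_(i < 2, j < 2)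
    if (i == ord0) && (j == ord0) then P * (a * c ^+ 2 + b * sn ^+ 2) + 2^-1 * sn2
    else if (i != ord0) && (j != ord0) then P * (b * c ^+ 2 + a * sn ^+ 2) + 2^-1 * sn2
    else P * (a - b) * sn * c.

(* objective [z - zbar]^T Sigma^{-1} [z - zbar], z = (zr, zi), sn2 = sigma_nu^2 *)
Definition objective (phi : R -> R) (P w sn2 zr zi th s : R) : R :=
  let d := cvec2 zr zi - zbar phi P w th s in
  ((d^T *m invmx (Sigma phi P w sn2 th s) *m d) ord0 ord0).

Definition in_domain (thR th s : R) : Prop := 0 < th <= thR /\ 0 < s.

Definition is_argmin (phi : R -> R) (P w sn2 thR zr zi th s : R) : Prop :=
  in_domain thR th s /\
  forall th' s', in_domain thR th' s' ->
    objective phi P w sn2 zr zi th s <= objective phi P w sn2 zr zi th' s'.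

(* a is an argument (phase) of z = zr + j zi, i.e. "angle z = a" (mod 2 pi);
   the phase is undefined for z = 0 *)
Definition is_phase (zr zi a : R) : Prop :=
  (zr, zi) != (0, 0) /\ zr = cmod2 zr zi * cos a /\ zi = cmod2 zr zi * sin a.

Definition is_sim (phi : R -> R) (P w thR zr zi th s : R) : Prop :=
  in_domain thR th s /\ is_phase zr zi (w * th) /\
  cmod2 zr zi = Num.sqrt P * phi (s * w).

End Defs.

From HB Require Import structures.
From mathcomp Require Import all_boot all_order all_algebra.
From mathcomp Require Import all_classical all_reals all_analysis.
From mathcomp Require Import measurable_realfun ring.
Import Order.TTheory GRing.Theory Num.Theory.
Local Open Scope ring_scope.

(* The weighted objective is a quadratic form in the inverse of Sigma, and
   Sigma is positive semidefinite: it is sigma_nu^2/2 times the identity plus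
   P times diag(v_c, v_s) conjugated by the rotation of angle omega theta, and
   v_c = Var[cos(sigma omega eta)], v_s = E[sin^2(sigma omega eta)] are
   nonnegative.  Hence the objective is nonnegative everywhere, while it
   vanishes at the solution of the simple equations, which therefore is a
   minimizer; uniqueness of the minimizer gives the equality. *)

Section charfun_variance.
Context {R : realType} (mu : probability (measurableTypeR R) R).

Lemma integrable_cos_scale (t : R) :
  mu.-integrable setT (EFin \o (fun x => cos (t * x))).
Proof.
apply: measurable_bounded_integrable => //.
- by rewrite -ge0_fin_numE ?fin_num_measure.
- apply: measurableT_comp; last exact: measurable_funM.
  by apply: continuous_measurable_fun; exact: continuous_cos.
- rewrite /bounded_near; near=> M => x _ /=.
  apply: le_trans (_ : 1 <= M); first by rewrite ler_norml cos_le1 cos_geN1.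
  by near: M; exact: nbhs_pinfty_ge.
Unshelve. all: by end_near.
Qed.

Lemma Rintegral_prob_cst (r : R) : \int[mu]_(x in setT) r = r.
Proof.
rewrite Rintegral_cst // -[RHS]mulr1; congr (_ * _).
apply: (@eq_trans _ _ (fine 1%E)) => //; congr fine; exact: probability_setT.
Qed.

Lemma charfun_le1 (t : R) : charfun mu t <= 1.
Proof.
rewrite /charfun -(Rintegral_prob_cst 1); apply: le_Rintegral => //.
- exact: integrable_cos_scale.
- exact: finite_measure_integrable_cst.
Qed.

Lemma charfun_variance (a : R) :
  \int[mu]_(x in setT) (cos (a * x) - charfun mu a) ^+ 2 =
  2^-1 + 2^-1 * charfun mu (2 * a) - charfun mu a ^+ 2.
Proof.
set m := charfun mu a.
have intZ r t : mu.-integrable setT (EFin \o (fun x => r * cos (t * x))).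
  exact: (integrableZl _ r (integrable_cos_scale t)).
have intB : mu.-integrable setT (EFin \o
    (fun x => 2^-1 * cos ((2 * a) * x) - 2 * m * cos (a * x))).
  exact: (integrableB _ (intZ _ _) (intZ _ _)).
transitivity (\int[mu]_(x in setT) ((2^-1 + m ^+ 2) +
    (2^-1 * cos ((2 * a) * x) - 2 * m * cos (a * x)))).
  apply: eq_Rintegral => x _.
  by rewrite -mulrA mulr_natl cos_mulr2n; field.
rewrite RintegralD //; last exact: finite_measure_integrable_cst.
rewrite RintegralB ?RintegralZl //; try exact: integrable_cos_scale.
by rewrite Rintegral_prob_cst -/(charfun mu _) -/(charfun mu a) -/m; ring.
Qed.

Lemma vc_charfun_ge0 (w s : R) : 0 <= vc (charfun mu) w s.
Proof.
by rewrite /vc -mulrA -charfun_variance; apply: Rintegral_ge0 => x _; exact: sqr_ge0.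
Qed.

Lemma vs_charfun_ge0 (w s : R) : 0 <= vs (charfun mu) w s.
Proof. by rewrite /vs subr_ge0 ler_piMr ?invr_gt0 ?charfun_le1. Qed.

End charfun_variance.

(* When [S] is singular, [invmx S = S], so the quadratic form is still that of [S]. *)
Lemma invmx_quad_ge0 (R : numFieldType) n (S : 'M[R]_n) (d : 'cV[R]_n) :
  S^T = S -> (forall v : 'cV[R]_n, 0 <= (v^T *m S *m v) ord0 ord0) ->
  0 <= (d^T *m invmx S *m d) ord0 ord0.
Proof.
move=> symS psdS; have [unitS|/invmx_out ->] := boolP (S \in unitmx); last exact: psdS.
rewrite -[d](mulKVmx unitS) trmx_mul symS -!mulmxA mulKmx // mulmxA.
exact: psdS.
Qed.

Section Sigma_psd.
Context {R : realType} (phi : R -> R) (P w sn2 th s : R).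

Lemma Sigma_sym : (Sigma phi P w sn2 th s)^T = Sigma phi P w sn2 th s.
Proof.
by apply/matrixP => -[[|[|i]] Hi] [[|[|j]] Hj]; rewrite !mxE.
Qed.

Lemma Sigma_quadE (v : 'cV[R]_2) :
  let c := cos (w * th) in let sn := sin (w * th) in
  let v0 := v ord0 ord0 in let v1 := v ord_max ord0 in
  (v^T *m Sigma phi P w sn2 th s *m v) ord0 ord0 =
  P * (vc phi w s * (c * v0 + sn * v1) ^+ 2 + vs phi w s * (sn * v0 - c * v1) ^+ 2)
  + 2^-1 * sn2 * (v0 ^+ 2 + v1 ^+ 2).
Proof.
rewrite /= !mxE !big_ord_recr !big_ord0 /= !add0r !mxE !big_ord_recr !big_ord0 /= !add0r.
rewrite (_ : widen_ord _ ord_max = ord0 :> 'I_2); last exact: val_inj.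
by rewrite !mxE /=; ring.
Qed.

Lemma Sigma_psd (v : 'cV[R]_2) :
  0 <= P -> 0 <= sn2 -> 0 <= vc phi w s -> 0 <= vs phi w s ->
  0 <= (v^T *m Sigma phi P w sn2 th s *m v) ord0 ord0.
Proof.
move=> P0 sn20 vc0 vs0; rewrite Sigma_quadE.
apply: addr_ge0; apply: mulr_ge0 => //.
- by apply: addr_ge0; apply: mulr_ge0; rewrite // sqr_ge0.
- by rewrite mulr_ge0.
- by rewrite addr_ge0 ?sqr_ge0.
Qed.

End Sigma_psd.

Section objective.
Context {R : realType} (phi : R -> R) (P w sn2 zr zi : R).

Lemma objective_ge0 th s :
  0 <= P -> 0 <= sn2 -> 0 <= vc phi w s -> 0 <= vs phi w s ->
  0 <= objective phi P w sn2 zr zi th s.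
Proof.
move=> P0 sn20 vc0 vs0; apply: invmx_quad_ge0; first exact: Sigma_sym.
by move=> v; exact: Sigma_psd.
Qed.

Lemma objective_sim thR th s :
  is_sim phi P w thR zr zi th s -> objective phi P w sn2 zr zi th s = 0.
Proof.
case=> _ [[_ [zrE ziE]] modE].
by rewrite /objective /zbar -modE -zrE -ziE subrr mulmx0 mxE.
Qed.

Lemma is_sim_argmin thR th s :
  0 <= P -> 0 <= sn2 -> (forall s', 0 <= vc phi w s') ->
  (forall s', 0 <= vs phi w s') ->
  is_sim phi P w thR zr zi th s -> is_argmin phi P w sn2 thR zr zi th s.
Proof.
move=> P0 sn20 vc0 vs0 sim; split; first by case: sim.
by move=> th' s' _; rewrite (objective_sim _ _ _ sim); exact: objective_ge0.
Qed.

End objective.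

Theorem theorem1 (R : realType) (mu : probability (measurableTypeR R) R)
  (P thR w sigma_nu : R) (zr zi : R) (th_opt s_opt th_sim s_sim : R) :
  symmetric_law mu -> 0 < P -> 0 < thR -> 0 < w -> w <= 2 * pi / thR ->
  0 < sigma_nu ->
  cmod2 zr zi <= Num.sqrt P ->
  is_sim (charfun mu) P w thR zr zi th_sim s_sim ->
  (forall th s, is_sim (charfun mu) P w thR zr zi th s ->
     th = th_sim /\ s = s_sim) ->
  is_argmin (charfun mu) P w (sigma_nu ^+ 2) thR zr zi th_opt s_opt ->
  (forall th s, is_argmin (charfun mu) P w (sigma_nu ^+ 2) thR zr zi th s ->
     th = th_opt /\ s = s_opt) ->
  th_opt = th_sim /\ s_opt = s_sim.
Proof.
(* The bound |z_L| <= sqrt P only makes the simple equations solvable; here a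
   solution is given. *)
move=> _ P_gt0 _ _ _ _ _ sim _ _ argmin_uniq.
have sim_argmin : is_argmin (charfun mu) P w (sigma_nu ^+ 2) thR zr zi th_sim s_sim.
  exact: is_sim_argmin (ltW P_gt0) (sqr_ge0 _) (vc_charfun_ge0 mu w)
    (vs_charfun_ge0 mu w) sim.
by have [-> ->] := argmin_uniq _ _ sim_argmin.
Qed.
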